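(* Let $M$ be a compact Kähler manifold of complex dimension $3$ with trivial canonical bundle. Suppose $H_2(M,\mathbb{Z})$ is torsion-free with basis $e_1,\dots,e_r$, and let $e^1,\dots,e^r\in H^2(M,\mathbb{Z})$ be the dual basis. Let $P$ be the set of nonzero classes $\eta=\sum_j a^je_j$ with all $a^j\ge0$. Let $\mathcal{R}=\mathbb{Q}[[q_1,\dots,q_r]]$, put $q^\eta=\prod_j q_j^{a^j}$, and fix rational numbers $(N_\eta)_{\eta\in P}$. Define the $\mathcal{R}$-bilinear product $\star$ on $H^{ev}(M,\mathbb{Q})\otimes\mathcal{R}$ on homogeneous classes by $\zeta_1\star\zeta_2=\zeta_1\cup\zeta_2$, unless $\zeta_1,\zeta_2\in H^2(M,\mathbb{Q})$, in which case \[\zeta_1\star\zeta_2=\zeta_1\cup\zeta_2+\sum_{\eta\in P}\zeta_1(\eta)\zeta_2(\eta)N_\eta\frac{q^\eta}{1-q^\eta}\eta^\vee .\] For $j=1,\dots,r$, let $\delta_j=2\pi i\,q_j\,\partial/\partial q_j$, acting on $H^{ev}(M,\mathbb{C})\otimes\mathcal{R}$ through the coefficients. Define operators $D_j=\delta_j+(e^j\star\,\cdot\,)$ on $H^{ev}(M,\mathbb{C})\otimes\mathcal{R}$. Then $D_jD_k=D_kD_j$ for all $j,k$. Equivalently, the formal connection $\nabla=d+\sum_j dt_j\otimes(e^j\star\cdot)$, where $q_j=e^{2\pi i t_j}$, is flat.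
   Context: $\frac{q^\eta}{1-q^\eta}$ denotes the formal series $\sum_{m\ge1}q^{m\eta}$. $\eta^\vee\in H^4(M,\mathbb{Q})$ is the Poincaré dual of $\eta$, characterized by $\int_M\eta^\vee\cup\zeta=\zeta(\eta)$ for $\zeta\in H^2$. Here $\zeta(\eta)$ is the pairing of cohomology with homology. *)

From HB Require Import structures.
From mathcomp Require Import all_boot all_order all_algebra.
From mathcomp Require Import reals trigo.
From mathcomp Require Import complex.

Set Implicit Arguments.
Unset Strict Implicit.
Unset Printing Implicit Defensive.

Import Order.TTheory GRing.Theory Num.Theory.
Local Open Scope ring_scope.

(* Model of H^ev(M,C) (x) C[[q_1,...,q_r]] for a compact connected Kahler    *)
(* Calabi-Yau threefold M with H_2(M,Z) torsion free of rank r, written in   *)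
(* the basis                                                                  *)
(*    1 in H^0,  e^1..e^r in H^2,  e_1^v..e_r^v in H^4,  vol in H^6          *)
(* where e^j is the dual basis of the basis e_j of H_2, e_k^v is the Poincare *)
(* dual of e_k, and vol is the class with integral 1.  The cup product is    *)
(* then determined by the triple intersection numbers                         *)
(*    c i j k = \int_M e^i u e^j u e^k   (an integer, totally symmetric):     *)
(*    e^i u e^j = \sum_k c i j k e_k^v ,   e^i u e_k^v = [i == k] vol.        *)

Section QuantumConnection.
Variables (R : realType) (r : nat).

Local Notation C := (complex R).

(* multi-indices = exponent vectors of monomials q^m, and classes in H_2   *)
Definition mi := {ffun 'I_r -> nat}.

Definition series := mi -> C.

Definition mi_le (a m : mi) : bool := [forall i, (a i <= m i)%N].
Definition mi_sub (m a : mi) : mi := [ffun i => (m i - a i)%N].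
Definition mi_deg (m : mi) : nat := (\sum_i m i)%N.
Definition mi_of n (a : {ffun 'I_r -> 'I_n}) : mi := [ffun i => nat_of_ord (a i)] : mi.
Definition mi_scale (d : nat) (m : mi) : mi := [ffun i => (d * m i)%N].

Definition szero : series := fun _ => 0.
Definition sone : series := fun m => if m == 0 then 1 else 0.
Definition sadd (f g : series) : series := fun m => f m + g m.
Definition sscale (a : C) (f : series) : series := fun m => a * f m.
(* Cauchy product: (f g)_m = \sum_{a <= m} f_a g_{m-a}; every a <= m has    *)
(* entries < (mi_deg m).+1, so the sum ranges over all a <= m exactly once. *)
Definition smul (f g : series) : series := fun m =>
  \sum_(a : {ffun 'I_r -> 'I_(mi_deg m).+1} | mi_le (mi_of a) m)
     f (mi_of a) * g (mi_sub m (mi_of a)).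

(* q^eta / (1 - q^eta) = \sum_{d >= 1} q^{d eta}, for eta <> 0 *)
Definition geom (eta : mi) : series := fun m =>
  if (eta != 0) && [exists d : 'I_(mi_deg m).+1, (0 < d)%N && (m == mi_scale d eta)]
  then 1 else 0.

(* basis index: H^0 | H^2 | H^4 | H^6 *)
Definition basis := ((unit + 'I_r) + ('I_r + unit))%type.
(* elements of H^ev(M,C) (x) C[[q]] : coordinates in the basis above *)
Definition hvec := basis -> series.

Definition mkV (a0 : series) (a2 a4 : 'I_r -> series) (a6 : series) : hvec :=
  fun b => match b with
           | inl (inl _) => a0
           | inl (inr j) => a2 j
           | inr (inl k) => a4 k
           | inr (inr _) => a6
           end.
Definition H0 (x : hvec) : series := x (inl (inl tt)).
Definition H2 (x : hvec) (j : 'I_r) : series := x (inl (inr j)).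
Definition H4 (x : hvec) (k : 'I_r) : series := x (inr (inl k)).
Definition H6 (x : hvec) : series := x (inr (inr tt)).

Definition vadd (x y : hvec) : hvec := fun b => sadd (x b) (y b).

Definition ssum (I : finType) (F : I -> series) : series :=
  fun m => \sum_(i : I) F i m.

Definition cup (c : 'I_r -> 'I_r -> 'I_r -> int) (x y : hvec) : hvec :=
  mkV (smul (H0 x) (H0 y))
      (fun j => sadd (smul (H0 x) (H2 y j)) (smul (H2 x j) (H0 y)))
      (fun k => sadd (sadd (smul (H0 x) (H4 y k)) (smul (H4 x k) (H0 y)))
                     (ssum (fun ij : 'I_r * 'I_r =>
                        sscale ((c ij.1 ij.2 k)%:~R) (smul (H2 x ij.1) (H2 y ij.2)))))
      (sadd (sadd (smul (H0 x) (H6 y)) (smul (H6 x) (H0 y)))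
            (ssum (fun k => sadd (smul (H2 x k) (H4 y k)) (smul (H4 x k) (H2 y k))))).

Definition pair2 (x : hvec) (eta : mi) : series :=
  ssum (fun j => sscale ((eta j)%:R) (H2 x j)).

(* k-th coordinate (on e_k^v) of                                            *)
(*  \sum_{eta in P} x(eta) y(eta) N_eta q^eta/(1-q^eta) eta^v,             *)
(* with eta^v = \sum_k a^k e_k^v.  At the monomial q^m only the finitely   *)
(* many eta in P with eta <= m contribute (geom eta is supported on        *)
(* positive multiples of eta), so the coefficient is the finite sum below. *)
Definition qcorr (N : mi -> rat) (x y : hvec) (k : 'I_r) : series := fun m =>
  \sum_(a : {ffun 'I_r -> 'I_(mi_deg m).+1} | (mi_of a != 0) && mi_le (mi_of a) m)
     ((mi_of a k)%:R * ratr (N (mi_of a)) *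
      smul (smul (pair2 x (mi_of a)) (pair2 y (mi_of a))) (geom (mi_of a)) m).

Definition qstar c N (x y : hvec) : hvec :=
  vadd (cup c x y) (mkV szero (fun _ => szero) (qcorr N x y) szero).

Definition ecl (j : 'I_r) : hvec :=
  mkV szero (fun i => if i == j then sone else szero) (fun _ => szero) szero.

(* delta_j = 2 pi i q_j d/dq_j, acting coefficientwise *)
Definition delta (j : 'I_r) (x : hvec) : hvec := fun b m =>
  (real_complex R (2 * pi)) * Complex 0 1 * (m j)%:R * x b m.

Definition Dop c N (j : 'I_r) (x : hvec) : hvec := vadd (delta j x) (qstar c N (ecl j) x).

End QuantumConnection.

From HB Require Import structures.
From mathcomp Require Import all_boot all_order all_algebra.
From mathcomp Require Import reals trigo.
From mathcomp Require Import complex.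
From mathcomp Require Import ring.
From Stdlib Require Import FunctionalExtensionality.

(* Each [delta_j] is a derivation of the series product, and the [delta_j]
   commute with each other.  Since the cup product is commutative and
   associative (the intersection numbers [c] are symmetric), the classical
   parts of [D_j] and [D_k] commute.  The only new ingredient is the quantum
   correction: [delta_j] multiplies the monomial [q^(d eta)] by
   [2 pi i d eta_j], so [eta_k delta_j (q^eta/(1-q^eta)) =
   eta_j delta_k (q^eta/(1-q^eta))], which makes the derivative of the
   correction term symmetric in [j] and [k]. *)

Set Implicit Arguments.
Unset Strict Implicit.
Unset Printing Implicit Defensive.

Import Order.TTheory GRing.Theory Num.Theory.
Local Open Scope ring_scope.

Section Series.
Variables (R : realType) (r : nat).
Local Notation series := (series R r).
Local Notation szero := (@szero R r).
Local Notation sone := (@sone R r).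
Local Notation geom := (@geom R r).

Lemma smul0l (g : series) : smul szero g = szero.
Proof.
by apply: functional_extensionality => m; rewrite /smul big1 // => a _; rewrite mul0r.
Qed.

Lemma smul1l (g : series) : smul sone g = g.
Proof.
apply: functional_extensionality => m; rewrite /smul.
pose a0 : {ffun 'I_r -> 'I_(mi_deg m).+1} := [ffun => ord0].
have a0E : mi_of a0 = 0 by apply/ffunP => i; rewrite !ffunE.
rewrite (bigD1 a0) /=; last by rewrite a0E; apply/forallP => i; rewrite ffunE.
rewrite a0E /sone eqxx mul1r big1 ?addr0.
  by congr g; apply/ffunP => i; rewrite !ffunE subn0.
move=> a /andP [_ /eqP a_neq0]; case: eqP => [a_eq0|]; last by rewrite mul0r.
case: a_neq0; apply/ffunP => i; apply: val_inj.
by move/ffunP: a_eq0 => /(_ i); rewrite !ffunE.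
Qed.

Lemma smulDl (f g h : series) : smul (sadd f g) h = sadd (smul f h) (smul g h).
Proof.
apply: functional_extensionality => m; rewrite /smul /sadd -big_split.
by apply: eq_bigr => a _; rewrite mulrDl.
Qed.

Lemma smulZl a (f h : series) : smul (sscale a f) h = sscale a (smul f h).
Proof.
apply: functional_extensionality => m; rewrite /smul /sscale mulr_sumr.
by apply: eq_bigr => b _; rewrite mulrA.
Qed.

Definition sdelta (j : 'I_r) (f : series) : series := fun m =>
  real_complex R (2 * pi) * Complex 0 1 * (m j)%:R * f m.

Lemma sdelta_smul j (f g : series) m :
  sdelta j (smul f g) m = smul (sdelta j f) g m + smul f (sdelta j g) m.
Proof.
rewrite /sdelta /smul mulr_sumr -big_split; apply: eq_bigr => a /forallP /(_ j).
rewrite /mi_sub /= !ffunE => le_am.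
have -> : (m j)%:R = ((a j)%:R + (m j - a j)%N%:R : complex R) by rewrite -natrD subnKC.
ring.
Qed.

(* Only the monomials [q^(d eta)] occur in [geom eta], and [delta_j] scales
   them by a multiple of [eta_j]. *)
Lemma sdelta_geom_sym (eta : mi r) j k m :
  (eta j)%:R * sdelta k (geom eta) m = (eta k)%:R * sdelta j (geom eta) m.
Proof.
rewrite /sdelta /geom.
case: ifP => [/andP [_ /existsP [d /andP [_ /eqP ->]]] | _]; last by rewrite !mulr0.
by rewrite !ffunE !natrM; ring.
Qed.

Lemma smul_sdelta_geom_sym (f : series) (eta : mi r) j k m :
  (eta j)%:R * smul f (sdelta k (geom eta)) m =
  (eta k)%:R * smul f (sdelta j (geom eta)) m.
Proof.
rewrite /smul !mulr_sumr; apply: eq_bigr => a _.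
by rewrite mulrCA sdelta_geom_sym mulrCA.
Qed.

Definition psum (F : mi r -> series) : series := fun m =>
  \sum_(a : {ffun 'I_r -> 'I_(mi_deg m).+1} | (mi_of a != 0) && mi_le (mi_of a) m)
     F (mi_of a) m.

Lemma psumD (F G : mi r -> series) m :
  psum F m + psum G m = psum (fun a => sadd (F a) (G a)) m.
Proof. by rewrite /psum -big_split. Qed.

Lemma sdelta_psum j (F : mi r -> series) m :
  sdelta j (psum F) m = psum (fun a => sdelta j (F a)) m.
Proof. by rewrite /sdelta /psum mulr_sumr. Qed.

Lemma eq_psum (F G : mi r -> series) m :
  (forall a, F a m = G a m) -> psum F m = psum G m.
Proof. by move=> FG; apply: eq_bigr. Qed.

End Series.

Section QuantumConnection.
Variables (R : realType) (r : nat).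
Variables (c : 'I_r -> 'I_r -> 'I_r -> int) (N : mi r -> rat).
Local Notation D := (@Dop R r c N).
Local Notation szero := (@szero R r).
Local Notation sone := (@sone R r).
Local Notation geom := (@geom R r).

Lemma hvecP (x y : hvec R r) :
  (forall m, H0 x m = H0 y m) -> (forall i m, H2 x i m = H2 y i m) ->
  (forall l m, H4 x l m = H4 y l m) -> (forall m, H6 x m = H6 y m) -> x = y.
Proof.
move=> e0 e2 e4 e6; apply: functional_extensionality => b.
apply: functional_extensionality => m.
by case: b => [[[]|i]|[l|[]]]; [apply: e0 | apply: e2 | apply: e4 | apply: e6].
Qed.

Lemma pair2_ecl j (eta : mi r) : pair2 (ecl R j) eta = sscale (eta j)%:R sone.
Proof.
apply: functional_extensionality => m; rewrite /pair2 /ssum /sscale /H2 /ecl /mkV /=.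
by rewrite (bigD1 j) //= eqxx big1 ?addr0 // => i /negPf ->; rewrite /szero mulr0.
Qed.

(* [cterm j x l] and [psum (qterm j x l)] are the classical and the quantum
   part of the [e_l^v]-coordinate of [e^j * x]. *)
Definition cterm (j : 'I_r) (x : hvec R r) (l : 'I_r) : series R r :=
  ssum (fun b => sscale (c j b l)%:~R (H2 x b)).

Definition qterm (j : 'I_r) (x : hvec R r) (l : 'I_r) (a : mi r) : series R r :=
  fun m => (a l)%:R * ratr (N a) * ((a j)%:R * smul (pair2 x a) (geom a) m).

Lemma H0_D j x m : H0 (D j x) m = sdelta j (H0 x) m.
Proof. by rewrite /H0 /Dop /vadd /qstar /vadd /sadd /cup /mkV /= smul0l /szero !addr0. Qed.

Lemma H2_D j x i m :
  H2 (D j x) i m = sdelta j (H2 x i) m + (if i == j then H0 x m else 0).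
Proof.
rewrite /Dop /qstar /vadd /cup /mkV /H0 /H2 /ecl /sadd /= smul0l /szero.
by case: eqP => _; rewrite ?smul1l ?smul0l /szero ?addr0 ?add0r.
Qed.

Lemma H4_D j x l m :
  H4 (D j x) l m = sdelta j (H4 x l) m + cterm j x l m + psum (qterm j x l) m.
Proof.
rewrite /Dop /qstar /vadd /cup /mkV /H0 /H2 /H4 /sadd /ssum /ecl /mkV /=.
rewrite !smul0l /szero !add0r addrA; congr (_ + _ + _).
  rewrite -(pair_bigA _ (fun a b => sscale (c a b l)%:~R
     (smul (if a == j then sone else szero) (x (inl (inr b)))) m)) /=.
  rewrite (bigD1 j) //= [X in _ + X]big1 ?addr0.
    by apply: eq_bigr => b _; rewrite eqxx smul1l.
  move=> i /negPf ->; rewrite big1 // => b _.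
  by rewrite smul0l /sscale /szero mulr0.
rewrite /qcorr /psum; apply: eq_bigr => a _.
by rewrite /qterm pair2_ecl !smulZl smul1l.
Qed.

Lemma H6_D j x m : H6 (D j x) m = sdelta j (H6 x) m + H4 x j m.
Proof.
rewrite /Dop /qstar /vadd /cup /mkV /H0 /H2 /H4 /H6 /ecl /sadd /ssum /=.
rewrite !smul0l /szero !add0r addr0 (bigD1 j) //= eqxx smul1l.
rewrite big1 ?smul0l /szero ?addr0 // => k /negPf ->.
by rewrite !smul0l /szero addr0.
Qed.

Lemma pair2_D j x (eta : mi r) :
  pair2 (D j x) eta = sadd (sdelta j (pair2 x eta)) (sscale (eta j)%:R (H0 x)).
Proof.
apply: functional_extensionality => m; rewrite /pair2 /ssum /sscale /sadd /sdelta.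
under eq_bigr => i _ do rewrite H2_D /sdelta mulrDr.
rewrite big_split /= mulr_sumr; congr (_ + _).
  by apply: eq_bigr => i _; ring.
by rewrite (bigD1 j) //= eqxx big1 ?addr0 // => i /negPf ->; rewrite mulr0.
Qed.

Lemma cterm_D j k x l m :
  cterm j (D k x) l m = sdelta k (cterm j x l) m + (c j k l)%:~R * H0 x m.
Proof.
rewrite /cterm /ssum /sscale /sdelta mulr_sumr.
under eq_bigr => b _ do rewrite H2_D /sdelta mulrDr.
rewrite big_split /=; congr (_ + _).
  by apply: eq_bigr => b _; ring.
by rewrite (bigD1 k) //= eqxx big1 ?addr0 // => i /negPf ->; rewrite mulr0.
Qed.

Lemma sdelta_qterm j k x l a m :
  sdelta j (qterm k x l a) m =
  (a l)%:R * ratr (N a) * ((a k)%:R * sdelta j (smul (pair2 x a) (geom a)) m).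
Proof. by rewrite /sdelta /qterm; ring. Qed.

Lemma quantum_part_comm j k x l m :
  sdelta j (psum (qterm k x l)) m + psum (qterm j (D k x) l) m =
  sdelta k (psum (qterm j x l)) m + psum (qterm k (D j x) l) m.
Proof.
rewrite !sdelta_psum !psumD; apply: eq_psum => a; rewrite /sadd !sdelta_qterm.
rewrite /qterm !pair2_D !smulDl !smulZl /sadd /sscale !sdelta_smul !mulrDr.
rewrite (smul_sdelta_geom_sym (pair2 x a) a k j m); ring.
Qed.

Lemma H4_DD j k x l m :
  H4 (D j (D k x)) l m = sdelta j (sdelta k (H4 x l)) m
    + (sdelta j (cterm k x l) m + sdelta k (cterm j x l) m + (c j k l)%:~R * H0 x m)
    + (sdelta j (psum (qterm k x l)) m + psum (qterm j (D k x) l) m).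
Proof. by rewrite H4_D cterm_D /sdelta H4_D /sdelta; ring. Qed.

Hypothesis c_sym12 : forall i j k, c i j k = c j i k.
Hypothesis c_sym23 : forall i j k, c i j k = c i k j.

Lemma Dop_comm j k x : D j (D k x) = D k (D j x).
Proof.
apply: hvecP => [m | i m | l m | m].
- by rewrite !H0_D /sdelta !H0_D /sdelta; ring.
- rewrite !H2_D /sdelta !H2_D /sdelta !H0_D /sdelta.
  by case: (i == j); case: (i == k); ring.
- by rewrite !H4_DD quantum_part_comm c_sym12 /sdelta; ring.
- rewrite !H6_D /sdelta !H6_D /sdelta !H4_D /sdelta.
  have -> : cterm k x j m = cterm j x k m.
    by apply: eq_bigr => b _; rewrite c_sym12 c_sym23 c_sym12.
  have -> : psum (qterm k x j) m = psum (qterm j x k) m.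
    by apply: eq_psum => a; rewrite /qterm; ring.
  ring.
Qed.

End QuantumConnection.

Theorem mainTheorem4 (R : realType) (r : nat)
    (c : 'I_r -> 'I_r -> 'I_r -> int)
    (c_sym12 : forall i j k, c i j k = c j i k)
    (c_sym23 : forall i j k, c i j k = c i k j)
    (N : mi r -> rat)
    (j k : 'I_r) (x : hvec R r) :
  Dop c N j (Dop c N k x) = Dop c N k (Dop c N j x).
Proof. exact: Dop_comm. Qed.
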